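(* Consider the toric code setting and the Liouvillian $\mathcal{L}$ described in the context. Let $\ket{\Psi}\in(\mathbb{C}^2)^{\otimes 2}$, let $\rho_{\mathcal{D}}$ be an arbitrary state on the qubits of $\mathcal{D}$, and let $$\rho_0=|\Psi\rangle\langle\Psi|_{\mathcal{A}}\otimes|+\rangle\langle+|^{\otimes 2(L-1)}_{\mathcal{B}\mathcal{B}'}\otimes|0\rangle\langle 0|^{\otimes 2(L-1)}_{\mathcal{C}\mathcal{C}'}\otimes\rho_{\mathcal{D}}.$$ Then for every two-qubit Pauli operator $P=P_1\otimes P_2$, $P_j\in\{I,X,Y,Z\}$, and every $t\ge 0$, $$\mathrm{tr}\big(\overline{P}\,e^{t\mathcal{L}}(\rho_0)\big)=\langle\Psi|P|\Psi\rangle .$$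
   Context: Lattice: periodic $L\times L$, vertices $(x,y)\in\mathbb{Z}_L^2$ ($x$ eastwards, $y$ northwards), horizontal edge $h(x,y)$ joining $(x,y),(x+1,y)$, vertical edge $u(x,y)$ joining $(x,y),(x,y+1)$, one qubit per edge ($2L^2$ qubits). Plaquette $p(x,y)$ has boundary edges $h(x,y),h(x,y+1),u(x,y),u(x+1,y)$; the star of vertex $(x,y)$ is $h(x,y),h(x-1,y),u(x,y),u(x,y-1)$. Stabilizers $S_p=\prod Z$ over the boundary of $p$, $S_v=\prod X$ over the star of $v$; $\mathcal{S}$ denotes the set of all plaquettes and vertices; $\mathbf{P}_j^{\pm}=\frac12(I\pm S_j)$. Special plaquette $p_*=p(0,0)$, special vertex $v_*=(1,1)$. Correction operators: $C_{p_*}=C_{v_*}=I$; for $p=p(x,0)$ with $x\neq0$, $C_p=X$ on $u(x+1,0)$; for $p=p(x,y)$ with $y\neq0$, $C_p=X$ on $h(x,y+1)$; for $v=(x,1)$ with $x\neq1$, $C_v=Z$ on $h(x-1,1)$; for $v=(x,y)$ with $y\neq1$, $C_v=Z$ on $u(x,y-1)$. For $j\in\mathcal{S}$ define the channel $\mathcal{T}_j(\rho)=\mathbf{P}_j^+\rho\mathbf{P}_j^++C_j\mathbf{P}_j^-\rho\mathbf{P}_j^-C_j^\dagger$, and $\mathcal{L}=\sum_{j\in\mathcal{S}}(\mathcal{T}_j-\mathrm{id})$. Qubit sets: $A_1=h(0,1)$, $A_2=u(1,0)$, $\mathcal{A}=\{A_1,A_2\}$, $\mathcal{B}=\{h(0,y):y\neq1\}$,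 $\mathcal{C}=\{h(x,1):x\neq0\}$, $\mathcal{B}'=\{u(x,0):x\neq1\}$, $\mathcal{C}'=\{u(1,y):y\neq0\}$, $\mathcal{D}$ the remaining $2(L-1)^2$ qubits. Logical operators: $\bar X_1=X_{A_1}\prod_{b\in\mathcal{B}}X_b$, $\bar Z_1=Z_{A_1}\prod_{c\in\mathcal{C}}Z_c$, $\bar X_2=X_{A_2}\prod_{b\in\mathcal{B}'}X_b$, $\bar Z_2=Z_{A_2}\prod_{c\in\mathcal{C}'}Z_c$, $\bar Y_j=i\bar X_j\bar Z_j$, $\bar I=I$; for $P=P_1\otimes P_2$ (first factor on $A_1$, second on $A_2$), $\overline{P}=\bar P_1\bar P_2$. $|+\rangle,|0\rangle$ are the $+1$ eigenstates of $X$, $Z$. *)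

From HB Require Import structures.
From mathcomp Require Import all_boot all_order all_algebra.
From mathcomp Require Import complex.
From mathcomp Require Import all_classical all_reals all_analysis.
Set Implicit Arguments. Unset Strict Implicit. Unset Printing Implicit Defensive.
Import Order.TTheory GRing.Theory Num.Theory.
Import numFieldNormedType.Exports.
Local Open Scope ring_scope.

(* Single-qubit Pauli letters. Basis convention: false = |0>, true = |1>. *)
Inductive pauli := pI | pX | pY | pZ.

Section Toric.
Variables (R : realType) (L : nat).
Local Notation C := (R[i]).

Definition imag_unit : C := Complex 0 1.

Definition pmat (p : pauli) (a b : bool) : C :=
  match p with
  | pI => if a == b then 1 else 0
  | pX => if a != b then 1 else 0
  | pY => if a == b then 0 else if b then - imag_unit else imag_unit
  | pZ => if a == b then (if a then -1 else 1) else 0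
  end.

(* Lattice Z_L x Z_L (the hypothesis 1 < L is made in the theorem). *)
Definition coord := 'Z_L.
(* inl (x,y) = horizontal edge h(x,y);  inr (x,y) = vertical edge u(x,y). *)
Definition edge := ((coord * coord) + (coord * coord))%type.
Definition hE (x y : coord) : edge := inl (x, y).
Definition uE (x y : coord) : edge := inr (x, y).

(* Computational basis of the 2L^2 qubits, and operators as matrices on it. *)
Definition config := {ffun edge -> bool}.
Definition op := config -> config -> C.

Definition mulo (A B : op) : op := fun a b => \sum_c A a c * B c b.
Definition addo (A B : op) : op := fun a b => A a b + B a b.
Definition scaleo (z : C) (A : op) : op := fun a b => z * A a b.
Definition adjo (A : op) : op := fun a b => conjc (A b a).
Definition tro (A : op) : C := \sum_a A a a.

Definition pstr (f : edge -> pauli) : op :=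
  fun a b => \prod_e pmat (f e) (a e) (b e).
Definition idop : op := pstr (fun _ => pI).

(* Stabilizer sites: inl (x,y) = plaquette p(x,y), inr (x,y) = vertex (x,y). *)
Definition site := ((coord * coord) + (coord * coord))%type.

Definition plaq_bd (x y : coord) : seq edge :=
  [:: hE x y; hE x (y + 1); uE x y; uE (x + 1) y].
Definition star (x y : coord) : seq edge :=
  [:: hE x y; hE (x - 1) y; uE x y; uE x (y - 1)].

Definition stab (j : site) : op :=
  match j with
  | inl (x, y) => pstr (fun e => if e \in plaq_bd x y then pZ else pI)
  | inr (x, y) => pstr (fun e => if e \in star x y then pX else pI)
  end.

Definition projP (j : site) : op := scaleo (1 / 2) (addo idop (stab j)).
Definition projM (j : site) : op := scaleo (1 / 2) (addo idop (scaleo (-1) (stab j))).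

(* The qubit on which the correction C_j acts (None: C_j = I), and its letter. *)
Definition corr_edge (j : site) : option edge :=
  match j with
  | inl (x, y) =>
      if (x == 0) && (y == 0) then None
      else if y == 0 then Some (uE (x + 1) 0) else Some (hE x (y + 1))
  | inr (x, y) =>
      if (x == 1) && (y == 1) then None
      else if y == 1 then Some (hE (x - 1) 1) else Some (uE x (y - 1))
  end.
Definition corr_letter (j : site) : pauli :=
  match j with inl _ => pX | inr _ => pZ end.
Definition corr (j : site) : op :=
  pstr (fun e => if corr_edge j == Some e then corr_letter j else pI).

Definition Tchan (j : site) (rho : op) : op :=
  addo (mulo (mulo (projP j) rho) (projP j))
       (mulo (mulo (mulo (mulo (corr j) (projM j)) rho) (projM j)) (adjo (corr j))).

Definition Lind (rho : op) : op :=
  fun a b => \sum_(j : site) (Tchan j rho a b - rho a b).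

Definition exp_partial (t : R) (n : nat) (rho : op) : op :=
  fun a b => \sum_(k < n) (real_complex R (t ^+ k / (k`!)%:R) * iter k Lind rho a b).

Definition expL (t : R) (rho : op) : op :=
  fun a b => Complex (limn (fun n => complex.Re (exp_partial t n rho a b)))
                     (limn (fun n => complex.Im (exp_partial t n rho a b))).

Definition A1 : edge := hE 0 1.
Definition A2 : edge := uE 1 0.
Definition inA (e : edge) : bool := (e == A1) || (e == A2).
Definition inB (e : edge) : bool :=
  match e with inl (x, y) => (x == 0) && (y != 1) | inr _ => false end.
Definition inC (e : edge) : bool :=
  match e with inl (x, y) => (y == 1) && (x != 0) | inr _ => false end.
Definition inB' (e : edge) : bool :=
  match e with inr (x, y) => (y == 0) && (x != 1) | inl _ => false end.
Definition inC' (e : edge) : bool :=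
  match e with inr (x, y) => (x == 1) && (y != 0) | inl _ => false end.
Definition inD (e : edge) : bool :=
  ~~ [|| inA e, inB e, inB' e, inC e | inC' e].

Definition Xbar1 : op := pstr (fun e => if (e == A1) || inB e then pX else pI).
Definition Zbar1 : op := pstr (fun e => if (e == A1) || inC e then pZ else pI).
Definition Xbar2 : op := pstr (fun e => if (e == A2) || inB' e then pX else pI).
Definition Zbar2 : op := pstr (fun e => if (e == A2) || inC' e then pZ else pI).

Definition logical (Xb Zb : op) (p : pauli) : op :=
  match p with
  | pI => idop
  | pX => Xb
  | pZ => Zb
  | pY => scaleo imag_unit (mulo Xb Zb)
  end.
Definition Pbar (p1 p2 : pauli) : op :=
  mulo (logical Xbar1 Zbar1 p1) (logical Xbar2 Zbar2 p2).

Definition Dedge := {e : edge | inD e}.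
Definition Dconfig := {ffun Dedge -> bool}.
Definition restrD (a : config) : Dconfig := [ffun d : Dedge => a (val d)].

Definition is_stateD (rhoD : Dconfig -> Dconfig -> C) : Prop :=
  (forall v : Dconfig -> C, 0 <= \sum_a \sum_b conjc (v a) * rhoD a b * v b)
  /\ \sum_a rhoD a a = 1.

(* Two-qubit vector |Psi>, amplitude Psi x1 x2 (x1 on A1, x2 on A2). *)
Definition rho0 (Psi : bool -> bool -> C) (rhoD : Dconfig -> Dconfig -> C) : op :=
  fun a b =>
    Psi (a A1) (a A2) * conjc (Psi (b A1) (b A2))
    * (\prod_(e | inB e || inB' e) (1 / 2 : C))
    * (\prod_(e | inC e || inC' e) (if ~~ a e && ~~ b e then 1 else 0))
    * rhoD (restrD a) (restrD b).

Definition expect (Psi : bool -> bool -> C) (p1 p2 : pauli) : C :=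
  \sum_(x1 : bool) \sum_(x2 : bool) \sum_(y1 : bool) \sum_(y2 : bool)
    conjc (Psi x1 x2) * pmat p1 x1 y1 * pmat p2 x2 y2 * Psi y1 y2.

End Toric.

From Pilot Require Import Defs.
From HB Require Import structures.
From mathcomp Require Import all_boot all_order all_algebra.
From mathcomp Require Import complex.
From mathcomp Require Import all_classical all_reals all_analysis.
From mathcomp Require Import ring.
Import Order.TTheory GRing.Theory Num.Theory.
Import numFieldNormedType.Exports.
Set Implicit Arguments. Unset Strict Implicit. Unset Printing Implicit Defensive.
Local Open Scope ring_scope.

(* The logical operators are Pauli strings commuting with every stabilizer S_j
   (plaquettes and stars meet them in 0 or 2 edges) and with every correction
   C_j (single-qubit X's avoid the support of the Z-logicals, single-qubit Z's
   that of the X-logicals).  For such an observable O, cyclicity of the trace,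
   (P_j^+-)^2 = P_j^+-, P_j^+ + P_j^- = I and C_j^dagger C_j = I give
   tr(O T_j(rho)) = tr(O rho), hence tr(O L(rho)) = 0: in the exponential series
   only the term k = 0 survives the trace.  That term is computed directly:
   Pbar acts as X on B, B' (expectation 1 in |+>), as Z on C, C' (expectation 1
   in |0>), trivially on D, and as P on A.  Finally the series converges
   entrywise because L is bounded for the entrywise l1 norm, and the trace
   against O is a finite linear function of the entries. *)

(* mathcomp.analysis.landau also defines mulo, addo and scaleo. *)
Local Notation mulo := Defs.mulo.
Local Notation addo := Defs.addo.
Local Notation scaleo := Defs.scaleo.

Section OperatorAlgebra.
Variables (R : realType) (L : nat).
Local Notation op := (op R L).
Local Notation config := (config L).
Implicit Types A B D O X Y : op.

Lemma mulo_assoc A B D : mulo (mulo A B) D = mulo A (mulo B D).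
Proof.
apply: funext => a; apply: funext => b; rewrite /Defs.mulo.
under eq_bigr do rewrite big_distrl /=.
rewrite exchange_big /=; apply: eq_bigr => c _.
by rewrite big_distrr /=; apply: eq_bigr => d _; rewrite mulrA.
Qed.

Lemma mulo_addl A B D : mulo (addo A B) D = addo (mulo A D) (mulo B D).
Proof.
apply: funext => a; apply: funext => b; rewrite /Defs.mulo /Defs.addo -big_split /=.
by apply: eq_bigr => c _; rewrite mulrDl.
Qed.

Lemma mulo_addr A B D : mulo A (addo B D) = addo (mulo A B) (mulo A D).
Proof.
apply: funext => a; apply: funext => b; rewrite /Defs.mulo /Defs.addo -big_split /=.
by apply: eq_bigr => c _; rewrite mulrDr.
Qed.

Lemma mulo_scalel z A B : mulo (scaleo z A) B = scaleo z (mulo A B).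
Proof.
apply: funext => a; apply: funext => b; rewrite /Defs.mulo /Defs.scaleo big_distrr /=.
by apply: eq_bigr => c _; rewrite mulrA.
Qed.

Lemma mulo_scaler z A B : mulo A (scaleo z B) = scaleo z (mulo A B).
Proof.
apply: funext => a; apply: funext => b; rewrite /Defs.mulo /Defs.scaleo big_distrr /=.
by apply: eq_bigr => c _; rewrite mulrCA.
Qed.

Lemma idopE (a b : config) : @idop R L a b = if a == b then 1 else 0.
Proof.
rewrite /idop /pstr; case: eqP => [->|/eqP nab].
  by apply: big1 => e _; rewrite /= eqxx.
have [e he] : exists e, a e != b e.
  apply/existsP; move: nab; apply: contraNT; rewrite negb_exists => /forallP h.
  by apply/eqP/ffunP => e; apply/eqP; move: (h e); rewrite negbK.
by rewrite (bigD1 e) //= (negbTE he) mul0r.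
Qed.

Lemma mul1o A : mulo (@idop R L) A = A.
Proof.
apply: funext => a; apply: funext => b; rewrite /Defs.mulo (bigD1 a) //= idopE eqxx mul1r.
by rewrite big1 ?addr0 // => c /negbTE; rewrite idopE eq_sym => ->; rewrite mul0r.
Qed.

Lemma mulo1 A : mulo A (@idop R L) = A.
Proof.
apply: funext => a; apply: funext => b; rewrite /Defs.mulo (bigD1 b) //= idopE eqxx mulr1.
by rewrite big1 ?addr0 // => c /negbTE; rewrite idopE => ->; rewrite mulr0.
Qed.

Lemma tro_mulC A B : tro (mulo A B) = tro (mulo B A).
Proof.
rewrite /tro /Defs.mulo exchange_big /=; apply: eq_bigr => a _.
by apply: eq_bigr => c _; rewrite mulrC.
Qed.

Lemma tro_add A B : tro (addo A B) = tro A + tro B.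
Proof. by rewrite /tro /Defs.addo big_split. Qed.

Lemma tro_mulo_sum (I : finType) O (F : I -> op) :
  tro (mulo O (fun a b => \sum_i F i a b)) = \sum_i tro (mulo O (F i)).
Proof.
rewrite /tro /Defs.mulo [RHS]exchange_big /=; apply: eq_bigr => a _.
by rewrite [RHS]exchange_big /=; apply: eq_bigr => c _; rewrite big_distrr.
Qed.

Lemma tro_mulo_scale z O X : tro (mulo O (scaleo z X)) = z * tro (mulo O X).
Proof. by rewrite mulo_scaler /tro /Defs.scaleo big_distrr. Qed.

Lemma tro_mulo_sub O X Y :
  tro (mulo O (fun a b => X a b - Y a b)) = tro (mulo O X) - tro (mulo O Y).
Proof.
rewrite /tro /Defs.mulo -sumrB; apply: eq_bigr => a _.
by rewrite -sumrB; apply: eq_bigr => c _; rewrite mulrBr.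
Qed.

End OperatorAlgebra.

Section PauliMatrices.
Variable R : realType.
Local Notation C := (R[i]).

Definition pauli_prod (p q : pauli) (x y : bool) : C :=
  \sum_(c : bool) pmat R p x c * pmat R q c y.

Definition pauli_sign (p q : pauli) : C :=
  match p, q with
  | pX, pY | pX, pZ | pY, pX | pY, pZ | pZ, pX | pZ, pY => -1
  | _, _ => 1
  end.

Lemma pauli_sign1r p : pauli_sign p pI = 1.
Proof. by case: p. Qed.

Lemma pauli_prodC p q x y : pauli_prod p q x y = pauli_sign p q * pauli_prod q p x y.
Proof.
case: p; case: q; case: x; case: y; rewrite /pauli_prod /pauli_sign /pmat !big_bool /=;
  by rewrite !(mul0r, mulr0, mul1r, mulr1, addr0, add0r, mulN1r, mulrN1, opprK,
               oppr0, mulrN, mulNr).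
Qed.

Lemma pauli_prodxx p x y : pauli_prod p p x y = pmat R pI x y.
Proof.
by case: p; case: x; case: y; rewrite /pauli_prod /pmat /imag_unit !big_bool /=; simpc.
Qed.

Lemma pauli_prod1r p x y : pauli_prod p pI x y = pmat R p x y.
Proof.
by case: p; case: x; case: y; rewrite /pauli_prod /pmat !big_bool /= ?(mulr0, mulr1, addr0, add0r).
Qed.

Lemma pauli_prod1l p x y : pauli_prod pI p x y = pmat R p x y.
Proof.
by case: p; case: x; case: y; rewrite /pauli_prod /pmat !big_bool /= ?(mul0r, mul1r, addr0, add0r).
Qed.

Lemma pauli_prodXZ x y : imag_unit R * pauli_prod pX pZ x y = pmat R pY x y.
Proof.
case: x; case: y; rewrite /pauli_prod /pmat /imag_unit !big_bool /=
  ?(mul0r, mul1r, mulr0, mulr1, addr0, add0r) //; by simpc.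
Qed.

Lemma conj_pmat p x y : conjc (pmat R p y x) = pmat R p x y.
Proof.
case: p; case: x; case: y;
  rewrite /pmat /imag_unit /= ?conjc0 ?conjc1 ?rmorphN ?conjc1 ?oppr0 //=; try simpc.
all: by apply/eqP; rewrite eq_complex /= ?oppr0 ?opprK ?eqxx.
Qed.

End PauliMatrices.

Section ProductOperators.
Variables (R : realType) (L : nat).
Local Notation C := (R[i]).
Local Notation op := (op R L).
Local Notation Pstr := (@pstr R L).

Definition prodop (F : edge L -> bool -> bool -> C) : op :=
  fun a b => \prod_e F e (a e) (b e).

Lemma pstr_prodop f : Pstr f = prodop (fun e => pmat R (f e)).
Proof. by []. Qed.

Lemma prodop_mul F G :
  mulo (prodop F) (prodop G) = prodop (fun e x y => \sum_(c : bool) F e x c * G e c y).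
Proof.
apply: funext => a; apply: funext => b; rewrite /Defs.mulo /prodop.
rewrite (bigA_distr_bigA (fun e c => F e (a e) c * G e c (b e))) /=.
by apply: eq_bigr => c _; rewrite big_split.
Qed.

Lemma tro_prodop F : tro (prodop F) = \prod_e \sum_(u : bool) F e u u.
Proof. by rewrite /tro /prodop bigA_distr_bigA. Qed.

Lemma pstr_mul f g : mulo (Pstr f) (Pstr g) = prodop (fun e => pauli_prod R (f e) (g e)).
Proof. by rewrite !pstr_prodop prodop_mul. Qed.

Lemma pstr_mulC f g : \prod_e pauli_sign R (f e) (g e) = 1 ->
  mulo (Pstr f) (Pstr g) = mulo (Pstr g) (Pstr f).
Proof.
move=> hsign; rewrite !pstr_mul; apply: funext => a; apply: funext => b; rewrite /prodop.
by under eq_bigr do rewrite pauli_prodC; rewrite big_split /= hsign mul1r.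
Qed.

Lemma pstr_sq f : mulo (Pstr f) (Pstr f) = @idop R L.
Proof.
rewrite pstr_mul; apply: funext => a; apply: funext => b; rewrite /prodop /idop /pstr.
by apply: eq_bigr => e _; rewrite pauli_prodxx.
Qed.

Lemma pstr_adj f : adjo (Pstr f) = Pstr f.
Proof.
apply: funext => a; apply: funext => b; rewrite /adjo /pstr rmorph_prod.
by apply: eq_bigr => e _; apply: conj_pmat.
Qed.

End ProductOperators.

Section ChannelInvariance.
Variables (R : realType) (L : nat).
Local Notation op := (op R L).
Local Notation ID := (@idop R L).
Implicit Types (A B O P X : op) (j : site L).

Definition commo A B := mulo A B = mulo B A.

Lemma commo_sym A B : commo A B -> commo B A.
Proof. by rewrite /commo => ->. Qed.

Lemma commo_mul A B O : commo A O -> commo B O -> commo (mulo A B) O.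
Proof. by rewrite /commo => hA hB; rewrite mulo_assoc hB -mulo_assoc hA mulo_assoc. Qed.

Lemma commo_scale z A O : commo A O -> commo (scaleo z A) O.
Proof. by rewrite /commo mulo_scalel mulo_scaler => ->. Qed.

Lemma commo_add A B O : commo A O -> commo B O -> commo (addo A B) O.
Proof. by rewrite /commo mulo_addl mulo_addr => -> ->. Qed.

Lemma commo_id O : commo ID O.
Proof. by rewrite /commo mul1o mulo1. Qed.

Lemma stab_sq j : mulo (stab R j) (stab R j) = ID.
Proof. by case: j => [[x y]|[x y]]; apply: pstr_sq. Qed.

Lemma corr_unitary j : mulo (adjo (corr R j)) (corr R j) = ID.
Proof. by rewrite /corr pstr_adj pstr_sq. Qed.

Lemma projP_idem j : mulo (projP R j) (projP R j) = projP R j.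
Proof.
rewrite /projP mulo_scalel mulo_scaler mulo_addl !mulo_addr !mul1o !mulo1 stab_sq.
by apply: funext => a; apply: funext => b; rewrite /Defs.scaleo /Defs.addo; field.
Qed.

Lemma projM_idem j : mulo (projM R j) (projM R j) = projM R j.
Proof.
rewrite /projM mulo_scalel mulo_scaler mulo_addl !mulo_addr !mul1o !mulo1.
rewrite !mulo_scalel !mulo_scaler ?mul1o stab_sq.
by apply: funext => a; apply: funext => b; rewrite /Defs.scaleo /Defs.addo; field.
Qed.

Lemma projP_addM j : addo (projP R j) (projM R j) = ID.
Proof.
apply: funext => a; apply: funext => b.
by rewrite /projP /projM /Defs.scaleo /Defs.addo; field.
Qed.

Lemma commo_projP j O : commo (stab R j) O -> commo (projP R j) O.
Proof. by move=> h; apply/commo_scale/commo_add => //; apply: commo_id. Qed.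

Lemma commo_projM j O : commo (stab R j) O -> commo (projM R j) O.
Proof. by move=> h; apply/commo_scale/commo_add; [apply: commo_id | apply: commo_scale]. Qed.

Lemma tro_sandwich O P X : mulo P P = P -> commo P O ->
  tro (mulo O (mulo (mulo P X) P)) = tro (mulo O (mulo P X)).
Proof.
move=> idemP hPO.
by rewrite tro_mulC mulo_assoc hPO tro_mulC mulo_assoc -(mulo_assoc P P) idemP.
Qed.

Lemma tro_Tchan j O X : commo O (stab R j) -> commo O (corr R j) ->
  tro (mulo O (Tchan j X)) = tro (mulo O X).
Proof.
move=> hOS hOC; rewrite /Tchan mulo_addr tro_add tro_sandwich ?projP_idem //; last first.
  by apply: commo_projP; apply: commo_sym.
set M := projM R j; set Cj := corr R j.
have hCOC : mulo (mulo (adjo Cj) O) Cj = O.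
  by rewrite mulo_assoc hOC -mulo_assoc corr_unitary mul1o.
have -> : tro (mulo O (mulo (mulo (mulo (mulo Cj M) X) M) (adjo Cj)))
    = tro (mulo O (mulo (mulo M X) M)).
  by rewrite -!mulo_assoc tro_mulC -!mulo_assoc hCOC !mulo_assoc.
rewrite tro_sandwich ?projM_idem //; last by apply: commo_projM; apply: commo_sym.
by rewrite -tro_add -mulo_addr -mulo_addl projP_addM mul1o.
Qed.

Definition commutes_code O := forall j, commo O (stab R j) /\ commo O (corr R j).

Lemma tro_Lind O X : commutes_code O -> tro (mulo O (Lind X)) = 0.
Proof.
move=> hO; rewrite /Lind tro_mulo_sum big1 // => j _.
by rewrite tro_mulo_sub; case: (hO j) => hS hC; rewrite tro_Tchan // subrr.
Qed.

Lemma tro_exp_partial O t n X : commutes_code O -> (0 < n)%N ->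
  tro (mulo O (exp_partial t n X)) = tro (mulo O X).
Proof.
move=> hO; case: n => // n _.
rewrite /exp_partial (tro_mulo_sum _ (fun k : 'I_n.+1 => scaleo _ _)).
rewrite big_ord_recl big1 ?addr0 => [|k _]; last by rewrite tro_mulo_scale tro_Lind ?mulr0.
by rewrite tro_mulo_scale expr0 fact0 divr1 rmorph1 mul1r.
Qed.

End ChannelInvariance.

Section LogicalCommutation.
Variables (R : realType) (L : nat).
Local Notation crd := (Defs.coord L).
Local Notation Pstr := (@pstr R L).
Local Notation A1 := (Defs.A1 L).
Local Notation A2 := (Defs.A2 L).
Implicit Types A B Xb Zb : op R L.

Lemma eq_hh (a b c d : crd) : (hE a b == hE c d) = (a == c) && (b == d).
Proof. by []. Qed.
Lemma eq_uu (a b c d : crd) : (uE a b == uE c d) = (a == c) && (b == d).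
Proof. by []. Qed.
Lemma eq_hu (a b c d : crd) : (hE a b == uE c d) = false.
Proof. by []. Qed.
Lemma eq_uh (a b c d : crd) : (uE a b == hE c d) = false.
Proof. by []. Qed.

Lemma addr1_eq (z : crd) : (z + 1 == z) = false.
Proof. by apply/negbTE; rewrite -[X in _ == X]addr0 (can_eq (addKr _)) oner_eq0. Qed.

Lemma subr1_eq (z : crd) : (z - 1 == z) = false.
Proof. by apply/negbTE; rewrite -[X in _ == X]addr0 (can_eq (addKr _)) oppr_eq0 oner_eq0. Qed.

Lemma addr1_eq1 (z : crd) : (z + 1 == 1) = (z == 0).
Proof. by rewrite -[X in _ == X]add0r (can_eq (addrK _)). Qed.

Lemma uniq_plaq_bd (x y : crd) : uniq (plaq_bd x y).
Proof. by rewrite /= !inE !(eq_hh, eq_uu, eq_hu, eq_uh) !eqxx eq_sym addr1_eq eq_sym addr1_eq. Qed.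

Lemma uniq_star (x y : crd) : uniq (star x y).
Proof. by rewrite /= !inE !(eq_hh, eq_uu, eq_hu, eq_uh) !eqxx eq_sym subr1_eq eq_sym subr1_eq. Qed.

Lemma Xbar1_supp_h (a b : crd) : ((hE a b == A1) || inB (hE a b)) = (a == 0).
Proof. by rewrite eq_hh /=; case: (a == 0); case: (b == 1). Qed.
Lemma Xbar1_supp_u (a b : crd) : ((uE a b == A1) || inB (uE a b)) = false.
Proof. by []. Qed.
Lemma Zbar1_supp_h (a b : crd) : ((hE a b == A1) || inC (hE a b)) = (b == 1).
Proof. by rewrite eq_hh /=; case: (a == 0); case: (b == 1). Qed.
Lemma Zbar1_supp_u (a b : crd) : ((uE a b == A1) || inC (uE a b)) = false.
Proof. by []. Qed.
Lemma Xbar2_supp_h (a b : crd) : ((hE a b == A2) || inB' (hE a b)) = false.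
Proof. by []. Qed.
Lemma Xbar2_supp_u (a b : crd) : ((uE a b == A2) || inB' (uE a b)) = (b == 0).
Proof. by rewrite eq_uu /=; case: (a == 1); case: (b == 0). Qed.
Lemma Zbar2_supp_h (a b : crd) : ((hE a b == A2) || inC' (hE a b)) = false.
Proof. by []. Qed.
Lemma Zbar2_supp_u (a b : crd) : ((uE a b == A2) || inC' (uE a b)) = (a == 1).
Proof. by rewrite eq_uu /=; case: (a == 1); case: (b == 0). Qed.

Lemma pauli_sign_prod_seq (f : edge L -> pauli) s l : uniq s ->
  \prod_e pauli_sign R (f e) (if e \in s then l else pI) = \prod_(e <- s) pauli_sign R (f e) l.
Proof.
move=> us; rewrite (big_uniq _ us) [RHS]big_mkcond; apply: eq_bigr => e _.
by case: ifP => // _; rewrite pauli_sign1r.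
Qed.

Lemma pauli_sign_prod_opt (f : edge L -> pauli) (o : option (edge L)) l :
  \prod_e pauli_sign R (f e) (if o == Some e then l else pI)
  = if o is Some e0 then pauli_sign R (f e0) l else 1.
Proof.
case: o => [e0|]; last by apply: big1 => e _; rewrite pauli_sign1r.
rewrite (bigD1 e0) //= eqxx big1 ?mulr1 // => e ne.
by rewrite (negbTE (_ : Some e0 != Some e)) ?pauli_sign1r // eq_sym.
Qed.

Lemma pauli_sign_prod_same (c d : edge L -> bool) l :
  \prod_e pauli_sign R (if c e then l else pI) (if d e then l else pI) = 1.
Proof. by apply: big1 => e _; case: (c e); case: (d e); case: l. Qed.


Lemma commutes_code_mul A B : commutes_code A -> commutes_code B -> commutes_code (mulo A B).
Proof. by move=> hA hB j; case: (hA j) (hB j) => ? ? [? ?]; split; apply: commo_mul. Qed.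

Lemma commutes_code_scale z A : commutes_code A -> commutes_code (scaleo z A).
Proof. by move=> hA j; case: (hA j) => ? ?; split; apply: commo_scale. Qed.

Lemma commutes_code_id : commutes_code (@idop R L).
Proof. by move=> j; split; apply: commo_id. Qed.

Ltac even_overlap :=
  rewrite pauli_sign_prod_seq ?uniq_plaq_bd ?uniq_star // /plaq_bd /star !big_cons big_nil
    ?Xbar1_supp_h ?Xbar1_supp_u ?Zbar1_supp_h ?Zbar1_supp_u
    ?Xbar2_supp_h ?Xbar2_supp_u ?Zbar2_supp_h ?Zbar2_supp_u;
  repeat (case: ifP => _); by rewrite /= ?(mulr1, mul1r, mulN1r, opprK).

Lemma commutes_code_Xbar1 : commutes_code (@Xbar1 R L).
Proof.
case=> [[x y]|[x y]]; split; apply: pstr_mulC.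
- even_overlap.
- by rewrite pauli_sign_prod_same.
- by rewrite pauli_sign_prod_same.
- rewrite pauli_sign_prod_opt /corr_edge; case: ifP => h1 //.
  case: ifP => [/eqP y1|_]; last by rewrite Xbar1_supp_u.
  by rewrite Xbar1_supp_h subr_eq0; rewrite y1 eqxx andbT in h1; rewrite h1.
Qed.

Lemma commutes_code_Zbar1 : commutes_code (@Zbar1 R L).
Proof.
case=> [[x y]|[x y]]; split; apply: pstr_mulC.
- by rewrite pauli_sign_prod_same.
- rewrite pauli_sign_prod_opt /corr_edge; case: ifP => h1 //.
  case: ifP => y0; first by rewrite Zbar1_supp_u.
  by rewrite Zbar1_supp_h addr1_eq1 y0.
- even_overlap.
- by rewrite pauli_sign_prod_same.
Qed.

Lemma commutes_code_Xbar2 : commutes_code (@Xbar2 R L).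
Proof.
case=> [[x y]|[x y]]; split; apply: pstr_mulC.
- even_overlap.
- by rewrite pauli_sign_prod_same.
- by rewrite pauli_sign_prod_same.
- rewrite pauli_sign_prod_opt /corr_edge; case: ifP => h1 //.
  case: ifP => y1; first by rewrite Xbar2_supp_h.
  by rewrite Xbar2_supp_u subr_eq0 y1.
Qed.

Lemma commutes_code_Zbar2 : commutes_code (@Zbar2 R L).
Proof.
case=> [[x y]|[x y]]; split; apply: pstr_mulC.
- by rewrite pauli_sign_prod_same.
- rewrite pauli_sign_prod_opt /corr_edge; case: ifP => h1 //.
  case: ifP => [/eqP y0|_]; last by rewrite Zbar2_supp_h.
  by rewrite Zbar2_supp_u addr1_eq1; rewrite y0 eqxx andbT in h1; rewrite h1.
- even_overlap.
- by rewrite pauli_sign_prod_same.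
Qed.

Lemma commutes_code_logical Xb Zb p :
  commutes_code Xb -> commutes_code Zb -> commutes_code (logical Xb Zb p).
Proof.
move=> hX hZ; case: p => //=; first exact: commutes_code_id.
exact/commutes_code_scale/commutes_code_mul.
Qed.

Lemma commutes_code_Pbar p1 p2 : commutes_code (@Pbar R L p1 p2).
Proof.
apply: commutes_code_mul; apply: commutes_code_logical.
- exact: commutes_code_Xbar1.
- exact: commutes_code_Zbar1.
- exact: commutes_code_Xbar2.
- exact: commutes_code_Zbar2.
Qed.

End LogicalCommutation.

Section InitialState.
Variables (R : realType) (L : nat).
Local Notation C := (R[i]).
Local Notation A1 := (Defs.A1 L).
Local Notation A2 := (Defs.A2 L).

Definition indc (b : bool) : C := if b then 1 else 0.

Lemma prod_indc (Q P : pred (edge L)) :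
  \prod_(e | Q e) indc (P e) = indc [forall e, Q e ==> P e].
Proof.
case: (boolP [forall e, Q e ==> P e]) => [/forallP h|].
  by apply: big1 => e he; move: (h e); rewrite he /= => ->.
rewrite negb_forall => /existsP [e]; rewrite negb_imply => /andP [hq hp].
by rewrite (bigD1 e) //= /indc (negbTE hp) mul0r.
Qed.

Lemma prod_edge_regions (G1 G2 GB GC GD : edge L -> C) :
  \prod_e (if e == A1 then G1 e else if e == A2 then G2 e
           else if inB e || inB' e then GB e else if inC e || inC' e then GC e
           else if inD e then GD e else 1)
  = G1 A1 * G2 A2 * \prod_(e | inB e || inB' e) GB e *
    \prod_(e | inC e || inC' e) GC e * \prod_(e | inD e) GD e.
Proof.
transitivity (\prod_e ((if e == A1 then G1 e else 1) * (if e == A2 then G2 e else 1) *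
  (if inB e || inB' e then GB e else 1) * (if inC e || inC' e then GC e else 1) *
  (if inD e then GD e else 1))).
  apply: eq_bigr => -[[a b]|[a b]] _;
    rewrite /inD /inA /Defs.A1 /Defs.A2 ?eq_hh ?eq_uu ?eq_hu ?eq_uh /=;
    [case: (a == 0); case: (b == 1) | case: (a == 1); case: (b == 0)];
    by rewrite /= ?(mulr1, mul1r).
by rewrite !big_split /= -!big_mkcond !big_pred1_eq.
Qed.

Definition extD (d : Dconfig L) (e : edge L) : bool :=
  if insub e : option (Dedge L) is Some e' then d e' else false.

Lemma extD_val d (e' : Dedge L) : extD d (val e') = d e'.
Proof. by rewrite /extD valK. Qed.

Lemma forall_restrD (c : config L) d :
  [forall e, inD e ==> (c e == extD d e)] = (restrD c == d).
Proof.
apply/forallP/eqP => [h|<-].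
  apply/ffunP => e'; rewrite ffunE; move: (h (val e')); rewrite (valP e') /=.
  by rewrite extD_val => /eqP.
move=> e; apply/implyP => he; rewrite /extD.
case: insubP => [e' _ He|]; last by rewrite he.
by rewrite /restrD ffunE He.
Qed.

Lemma forall_extD d d' : [forall e, inD e ==> (extD d e == extD d' e)] = (d == d').
Proof.
apply/forallP/eqP => [h|<-]; last by move=> e; rewrite eqxx implybT.
apply/ffunP => e'; move: (h (val e')); rewrite (valP e') /=.
by rewrite !extD_val => /eqP.
Qed.

Lemma sum_pair (I J : finType) (G : I * J -> C) : \sum_p G p = \sum_i \sum_j G (i, j).
Proof. by rewrite pair_bigA; apply: eq_bigr => -[i j]. Qed.

Variables (Psi : bool -> bool -> C) (rhoD : Dconfig L -> Dconfig L -> C).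

(* rho0 is expanded over the matrix units |y><x|_A (x) |d><d'|_D; each term of
   the expansion, indexed by ((x, y), (d, d')), is a product operator. *)
Local Notation unit_index := (((bool * bool) * (bool * bool)) * (Dconfig L * Dconfig L))%type.

Definition rho0_coef (p : unit_index) : C :=
  Psi p.1.2.1 p.1.2.2 * conjc (Psi p.1.1.1 p.1.1.2) * rhoD p.2.1 p.2.2.

Definition rho0_factor (p : unit_index) (e : edge L) (v u : bool) : C :=
  if e == A1 then indc (v == p.1.2.1) * indc (u == p.1.1.1)
  else if e == A2 then indc (v == p.1.2.2) * indc (u == p.1.1.2)
  else if inB e || inB' e then 1 / 2
  else if inC e || inC' e then indc (~~ v && ~~ u)
  else if inD e then indc (v == extD p.2.1 e) * indc (u == extD p.2.2 e)
  else 1.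

Lemma prodop_rho0_factor p (c a : config L) : prodop (rho0_factor p) c a =
  indc (c A1 == p.1.2.1) * indc (a A1 == p.1.1.1) * (indc (c A2 == p.1.2.2) * indc (a A2 == p.1.1.2))
  * \prod_(e : edge L | inB e || inB' e) (1 / 2 : C)
  * \prod_(e : edge L | inC e || inC' e) indc (~~ c e && ~~ a e)
  * (indc (restrD c == p.2.1) * indc (restrD a == p.2.2)).
Proof.
rewrite /prodop /rho0_factor prod_edge_regions; congr (_ * _).
rewrite [\prod_(e | inD e) _]big_split /=.
by rewrite !prod_indc !forall_restrD.
Qed.

Lemma rho0_decomp : rho0 Psi rhoD = fun c a => \sum_p rho0_coef p * prodop (rho0_factor p) c a.
Proof.
apply: funext => c; apply: funext => a.
pose w : unit_index := (((a A1, a A2), (c A1, c A2)), (restrD c, restrD a)).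
rewrite (bigD1 w) // [\sum_(i | _) _]big1 ?addr0.
  by rewrite prodop_rho0_factor /w /rho0_coef /= !eqxx /indc /rho0 /=; ring.
move=> [[[x1 x2] [y1 y2]] [d d']] hp; rewrite prodop_rho0_factor /=.
case: (eqVneq (c A1) y1) => [e1|]; last by rewrite /indc /= !(mul0r, mulr0).
case: (eqVneq (a A1) x1) => [e2|]; last by rewrite /indc /= !(mul0r, mulr0).
case: (eqVneq (c A2) y2) => [e3|]; last by rewrite /indc /= !(mul0r, mulr0).
case: (eqVneq (a A2) x2) => [e4|]; last by rewrite /indc /= !(mul0r, mulr0).
case: (eqVneq (restrD c) d) => [e5|]; last by rewrite /indc /= !(mul0r, mulr0).
case: (eqVneq (restrD a) d') => [e6|]; last by rewrite /indc /= !(mul0r, mulr0).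
by move: hp; rewrite /w -e1 -e2 -e3 -e4 -e5 -e6 eqxx.
Qed.

Variables (F : edge L -> bool -> bool -> C) (p1 p2 : pauli).
Hypotheses (FA1 : F A1 = pmat R p1) (FA2 : F A2 = pmat R p2)
  (FB : forall e, inB e || inB' e -> 1 / 2 * (\sum_u \sum_v F e u v) = 1)
  (FC : forall e, inC e || inC' e -> F e false false = 1)
  (FD : forall e, inD e -> F e = pmat R pI).

Lemma tro_prodop_rho0_factor p : tro (mulo (prodop F) (prodop (rho0_factor p))) =
  pmat R p1 p.1.1.1 p.1.2.1 * pmat R p2 p.1.1.2 p.1.2.2 * indc (p.2.1 == p.2.2).
Proof.
case: p => [[[x1 x2] [y1 y2]] [d d']] /=; rewrite prodop_mul tro_prodop.
transitivity (\prod_e (if e == A1 then F e x1 y1 else if e == A2 then F e x2 y2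
   else if inB e || inB' e then 1 / 2 * \sum_u \sum_v F e u v
   else if inC e || inC' e then F e false false
   else if inD e then indc (extD d e == extD d' e) else 1)).
  apply: eq_bigr => e _; rewrite /rho0_factor /=.
  case: ifP => h1.
    by rewrite !big_bool /indc; case: x1; case: y1; rewrite /= ?(mulr0, mulr1, addr0, add0r).
  case: ifP => h2.
    by rewrite !big_bool /indc; case: x2; case: y2; rewrite /= ?(mulr0, mulr1, addr0, add0r).
  case: ifP => hb.
    rewrite big_distrr; apply: eq_bigr => u _; rewrite big_distrr; apply: eq_bigr => v _.
    by rewrite mulrC.
  case: ifP => hc; first by rewrite !big_bool /indc /= ?(mulr0, mulr1, addr0, add0r).
  case: ifP => hd.
    rewrite (FD hd) !big_bool /indc /pmat.
    by case: (extD d e); case: (extD d' e); rewrite /= ?(mulr0, mulr1, addr0, add0r).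
  by move: hd hb hc; rewrite /inD /inA h1 h2 /=;
    case: (inB e); case: (inB' e); case: (inC e); case: (inC' e).
rewrite prod_edge_regions FA1 FA2 (eq_bigr _ FB) (eq_bigr _ FC) !big1_eq.
by rewrite prod_indc forall_extD !mulr1.
Qed.

Lemma tro_prodop_rho0 : \sum_d rhoD d d = 1 ->
  tro (mulo (prodop F) (rho0 Psi rhoD)) = expect Psi p1 p2.
Proof.
move=> trD; rewrite rho0_decomp (tro_mulo_sum _ (fun p => scaleo (rho0_coef p) _)).
under eq_bigr do rewrite tro_mulo_scale tro_prodop_rho0_factor.
have traceD q : \sum_(r : Dconfig L * Dconfig L) rho0_coef (q, r) *
    (pmat R p1 q.1.1 q.2.1 * pmat R p2 q.1.2 q.2.2 * indc (r.1 == r.2))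
  = Psi q.2.1 q.2.2 * conjc (Psi q.1.1 q.1.2) * (pmat R p1 q.1.1 q.2.1 * pmat R p2 q.1.2 q.2.2).
  rewrite sum_pair /rho0_coef /=.
  transitivity (\sum_(d : Dconfig L) Psi q.2.1 q.2.2 * conjc (Psi q.1.1 q.1.2) *
      (pmat R p1 q.1.1 q.2.1 * pmat R p2 q.1.2 q.2.2) * rhoD d d).
    apply: eq_bigr => d _; rewrite (bigD1 d) //= big1 ?addr0.
      by rewrite /indc eqxx; ring.
    by move=> d' /negbTE; rewrite eq_sym /indc => ->; rewrite !mulr0.
  by rewrite -big_distrr /= trD mulr1.
rewrite sum_pair; under eq_bigr do rewrite traceD.
rewrite /expect sum_pair; under eq_bigr do rewrite sum_pair.
by rewrite [LHS]sum_pair /= !big_bool /=; ring.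
Qed.

End InitialState.

Section LogicalStrings.
Variables (R : realType) (L : nat).
Local Notation A1 := (Defs.A1 L).
Local Notation A2 := (Defs.A2 L).
Local Notation Pstr := (@pstr R L).

Definition xpart p := match p with pX | pY => pX | _ => pI end.
Definition zpart p := match p with pZ | pY => pZ | _ => pI end.

Definition logical1_letter p (e : edge L) :=
  if e == A1 then p else if inB e then xpart p else if inC e then zpart p else pI.
Definition logical2_letter p (e : edge L) :=
  if e == A2 then p else if inB' e then xpart p else if inC' e then zpart p else pI.
Definition Pbar_letter p1 p2 (e : edge L) :=
  if e is inl _ then logical1_letter p1 e else logical2_letter p2 e.

Lemma inB_inC (e : edge L) : inB e -> inC e = false.
Proof. by case: e => [[a b]|[a b]] //= /andP [/eqP -> _]; rewrite eqxx andbF. Qed.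

Lemma inB'_inC' (e : edge L) : inB' e -> inC' e = false.
Proof. by case: e => [[a b]|[a b]] //= /andP [/eqP -> _]; rewrite eqxx andbF. Qed.

Lemma logical1_pstr p : logical (@Xbar1 R L) (@Zbar1 R L) p = Pstr (logical1_letter p).
Proof.
rewrite /logical1_letter; case: p => /=.
- apply: funext => a; apply: funext => b; apply: eq_bigr => e _.
  by case: (e == A1); case: (inB e); case: (inC e).
- by congr pstr; apply: funext => e; case: (e == A1); case: (inB e); case: (inC e).
- rewrite pstr_mul; apply: funext => a; apply: funext => b; rewrite /Defs.scaleo /prodop /pstr.
  rewrite (bigD1 A1) // [in RHS](bigD1 A1) //= ?eqxx /= mulrA pauli_prodXZ; congr (_ * _).
  apply: eq_bigr => e /negbTE -> /=.
  case hb: (inB e); first by rewrite (inB_inC hb) pauli_prod1r.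
  by case: (inC e); rewrite pauli_prod1l.
- congr pstr; apply: funext => e.
  by case: (e == A1) => //=; case hb: (inB e) => //; rewrite (inB_inC hb).
Qed.

Lemma logical2_pstr p : logical (@Xbar2 R L) (@Zbar2 R L) p = Pstr (logical2_letter p).
Proof.
rewrite /logical2_letter; case: p => /=.
- apply: funext => a; apply: funext => b; apply: eq_bigr => e _.
  by case: (e == A2); case: (inB' e); case: (inC' e).
- by congr pstr; apply: funext => e; case: (e == A2); case: (inB' e); case: (inC' e).
- rewrite pstr_mul; apply: funext => a; apply: funext => b; rewrite /Defs.scaleo /prodop /pstr.
  rewrite (bigD1 A2) // [in RHS](bigD1 A2) //= ?eqxx /= mulrA pauli_prodXZ; congr (_ * _).
  apply: eq_bigr => e /negbTE -> /=.
  case hb: (inB' e); first by rewrite (inB'_inC' hb) pauli_prod1r.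
  by case: (inC' e); rewrite pauli_prod1l.
- congr pstr; apply: funext => e.
  by case: (e == A2) => //=; case hb: (inB' e) => //; rewrite (inB'_inC' hb).
Qed.

Lemma Pbar_pstr p1 p2 : @Pbar R L p1 p2 = Pstr (Pbar_letter p1 p2).
Proof.
rewrite /Pbar logical1_pstr logical2_pstr pstr_mul.
apply: funext => a; apply: funext => b; apply: eq_bigr => -[[x y]|[x y]] _ /=.
  by rewrite /logical2_letter eq_hu pauli_prod1r.
by rewrite /logical1_letter eq_uh pauli_prod1l.
Qed.

Lemma plus_expect_xpart p : 1 / 2 * (\sum_u \sum_v pmat R (xpart p) u v) = 1.
Proof.
by case: p; rewrite /= !big_bool /pmat /= ?(addr0, add0r) -[1 + 1]/(2%:R) mul1r mulVf ?pnatr_eq0.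
Qed.

Lemma zero_expect_zpart p : pmat R (zpart p) false false = 1.
Proof. by case: p. Qed.

Lemma tro_Pbar_rho0 p1 p2 Psi rhoD : is_stateD rhoD ->
  tro (mulo (@Pbar R L p1 p2) (rho0 Psi rhoD)) = expect Psi p1 p2.
Proof.
move=> [_ trD]; rewrite Pbar_pstr pstr_prodop; apply: tro_prodop_rho0 => //.
all: case=> [[a b]|[a b]];
  rewrite /Pbar_letter /logical1_letter /logical2_letter /inD /inA /Defs.A1 /Defs.A2
    ?eq_hh ?eq_uu ?eq_hu ?eq_uh /=;
  [case: (a == 0); case: (b == 1) | case: (a == 1); case: (b == 0)] => //= _.
all: by rewrite ?plus_expect_xpart ?zero_expect_zpart.
Qed.

End LogicalStrings.

Section EntrywiseNorm.
Variables (R : realType) (L : nat).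
Local Notation C := (R[i]).
Local Notation op := (op R L).
Implicit Types (x y : C) (A B : op).

Definition cnorm1 x : R := `|complex.Re x| + `|complex.Im x|.

Lemma cnorm1_ge0 x : 0 <= cnorm1 x.
Proof. by rewrite addr_ge0. Qed.

Lemma cnorm1D x y : cnorm1 (x + y) <= cnorm1 x + cnorm1 y.
Proof.
case: x => a b; case: y => c d; rewrite /cnorm1 /=.
rewrite [X in _ <= X](_ : _ = (`|a| + `|c|) + (`|b| + `|d|)); last by ring.
by apply: lerD; apply: ler_normD.
Qed.

Lemma cnorm1B x y : cnorm1 (x - y) <= cnorm1 x + cnorm1 y.
Proof.
have -> : cnorm1 y = cnorm1 (- y) by case: y => a b; rewrite /cnorm1 /= !normrN.
exact: cnorm1D.
Qed.

Lemma cnorm1M x y : cnorm1 (x * y) <= cnorm1 x * cnorm1 y.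
Proof.
case: x => a b; case: y => c d; rewrite /cnorm1 /=.
rewrite [X in _ <= X](_ : _ = (`|a| * `|c| + `|b| * `|d|) + (`|a| * `|d| + `|b| * `|c|));
  last by ring.
apply: lerD; first by apply: le_trans (ler_normB _ _) _; rewrite !normrM.
by apply: le_trans (ler_normD _ _) _; rewrite !normrM.
Qed.

Lemma cnorm1_sum (I : Type) (r : seq I) (P : pred I) (F : I -> C) :
  cnorm1 (\sum_(i <- r | P i) F i) <= \sum_(i <- r | P i) cnorm1 (F i).
Proof.
apply: (big_ind2 (fun z (r : R) => cnorm1 z <= r)) => //; first by rewrite /cnorm1 normr0 addr0.
by move=> z1 z2 r1 r2 h1 h2; apply: le_trans (cnorm1D _ _) (lerD h1 h2).
Qed.

Definition onorm1 A : R := \sum_a \sum_b cnorm1 (A a b).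

Lemma onorm1_ge0 A : 0 <= onorm1 A.
Proof. by apply: sumr_ge0 => a _; apply: sumr_ge0 => b _; apply: cnorm1_ge0. Qed.

Lemma cnorm1_entry A a b : cnorm1 (A a b) <= onorm1 A.
Proof.
have le_sum (I : finType) (G : I -> R) i : (forall j, 0 <= G j) -> G i <= \sum_j G j.
  by move=> G0; rewrite (bigD1 i) //= lerDl sumr_ge0.
apply: le_trans (le_sum _ _ a _) => [|a']; last by apply: sumr_ge0 => ? _; apply: cnorm1_ge0.
by apply: le_sum => b'; apply: cnorm1_ge0.
Qed.

Lemma onorm1_add A B : onorm1 (addo A B) <= onorm1 A + onorm1 B.
Proof.
rewrite /onorm1 -big_split /=; apply: ler_sum => a _; rewrite -big_split /=.
by apply: ler_sum => b _; apply: cnorm1D.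
Qed.

Lemma onorm1_mul A B : onorm1 (mulo A B) <= onorm1 A * onorm1 B.
Proof.
apply: (@le_trans _ _ (\sum_a \sum_c cnorm1 (A a c) * \sum_b cnorm1 (B c b))).
  rewrite /onorm1 /Defs.mulo; apply: ler_sum => a _.
  under [X in _ <= X]eq_bigr do rewrite big_distrr /=.
  rewrite [X in _ <= X]exchange_big /=; apply: ler_sum => b _.
  by apply: le_trans (cnorm1_sum _ _ _) _; apply: ler_sum => c _; apply: cnorm1M.
rewrite /onorm1 big_distrl /=; apply: ler_sum => a _; rewrite big_distrl /=.
apply: ler_sum => c _; apply: ler_wpM2l; first exact: cnorm1_ge0.
rewrite [X in _ <= X](bigD1 c) //= lerDl.
by apply: sumr_ge0 => ? _; apply: sumr_ge0 => ? _; exact: cnorm1_ge0.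
Qed.

Lemma onorm1_mul_le A B k : onorm1 A <= k -> onorm1 (mulo A B) <= k * onorm1 B.
Proof. by move=> hA; apply: le_trans (onorm1_mul _ _) _; rewrite ler_wpM2r ?onorm1_ge0. Qed.

Definition Tchan_bound (j : site L) : R :=
  onorm1 (projP R j) * onorm1 (projP R j) +
  onorm1 (corr R j) * onorm1 (projM R j) * onorm1 (projM R j) * onorm1 (adjo (corr R j)).

Lemma Tchan_bound_ge0 j : 0 <= Tchan_bound j.
Proof. by rewrite /Tchan_bound addr_ge0 // ?mulr_ge0 // onorm1_ge0. Qed.

Lemma onorm1_Tchan j A : onorm1 (Tchan j A) <= Tchan_bound j * onorm1 A.
Proof.
apply: le_trans (onorm1_add _ _) _.
apply: le_trans (lerD (onorm1_mul_le _ (onorm1_mul_le _ (lexx _)))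
  (onorm1_mul_le _ (onorm1_mul_le _ (onorm1_mul_le _ (onorm1_mul_le _ (lexx _)))))) _.
by rewrite /Tchan_bound le_eqVlt; apply/orP; left; apply/eqP; ring.
Qed.

Definition Lind_bound : R := \sum_j (Tchan_bound j + 1).

Lemma Lind_bound_ge0 : 0 <= Lind_bound.
Proof. by apply: sumr_ge0 => j _; rewrite addr_ge0 // Tchan_bound_ge0. Qed.

Lemma onorm1_Lind A : onorm1 (Lind A) <= Lind_bound * onorm1 A.
Proof.
apply: (@le_trans _ _ (\sum_j (onorm1 (Tchan j A) + onorm1 A))).
  apply: (@le_trans _ _ (\sum_a \sum_b \sum_j (cnorm1 (Tchan j A a b) + cnorm1 (A a b)))).
    apply: ler_sum => a _; apply: ler_sum => b _.
    by apply: le_trans (cnorm1_sum _ _ _) _; apply: ler_sum => j _; exact: cnorm1B.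
  rewrite le_eqVlt; apply/orP; left; apply/eqP.
  rewrite exchange_big /=; under eq_bigr do rewrite exchange_big /=.
  rewrite exchange_big /=; apply: eq_bigr => j _; rewrite -big_split /=.
  by rewrite exchange_big /=; apply: eq_bigr => a _; rewrite big_split.
rewrite /Lind_bound big_distrl /=; apply: ler_sum => j _.
by rewrite mulrDl mul1r lerD2r onorm1_Tchan.
Qed.

Lemma onorm1_iter_Lind k A : onorm1 (iter k (@Lind R L) A) <= Lind_bound ^+ k * onorm1 A.
Proof.
elim: k => [|k IH]; first by rewrite expr0 mul1r.
rewrite iterS exprS -mulrA; apply: le_trans (onorm1_Lind _) _.
by rewrite ler_wpM2l // Lind_bound_ge0.
Qed.

End EntrywiseNorm.

Section SeriesLimit.
Variables (R : realType) (L : nat).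
Local Notation C := (R[i]).
Local Notation op := (op R L).
Local Notation Re := complex.Re.
Local Notation Im := complex.Im.
Local Open Scope classical_set_scope.

Lemma ReD (x y : C) : Re (x + y) = Re x + Re y. Proof. by case: x; case: y. Qed.
Lemma ImD (x y : C) : Im (x + y) = Im x + Im y. Proof. by case: x; case: y. Qed.

Lemma Re_sum (I : Type) (r : seq I) (P : pred I) (F : I -> C) :
  Re (\sum_(i <- r | P i) F i) = \sum_(i <- r | P i) Re (F i).
Proof. by apply: (big_morph _ ReD). Qed.

Lemma Im_sum (I : Type) (r : seq I) (P : pred I) (F : I -> C) :
  Im (\sum_(i <- r | P i) F i) = \sum_(i <- r | P i) Im (F i).
Proof. by apply: (big_morph _ ImD). Qed.

Lemma Re_realM (r : R) (z : C) : Re (real_complex R r * z) = r * Re z.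
Proof. by case: z => a b /=; rewrite mul0r subr0. Qed.

Lemma Im_realM (r : R) (z : C) : Im (real_complex R r * z) = r * Im z.
Proof. by case: z => a b /=; rewrite mul0r addr0. Qed.

Lemma Re_tro_mulo (O X : op) : Re (tro (mulo O X)) =
  \sum_a \sum_c (Re (O a c) * Re (X c a) - Im (O a c) * Im (X c a)).
Proof.
rewrite /tro /Defs.mulo Re_sum; apply: eq_bigr => a _; rewrite Re_sum; apply: eq_bigr => c _.
by case: (O a c) => ? ?; case: (X c a).
Qed.

Lemma Im_tro_mulo (O X : op) : Im (tro (mulo O X)) =
  \sum_a \sum_c (Re (O a c) * Im (X c a) + Im (O a c) * Re (X c a)).
Proof.
rewrite /tro /Defs.mulo Im_sum; apply: eq_bigr => a _; rewrite Im_sum; apply: eq_bigr => c _.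
by case: (O a c) => ? ?; case: (X c a) => ? ? /=; ring.
Qed.

Lemma cvg_series_exp_dominated (t : R) (w : nat -> R) (M : R) : 0 <= t -> 0 <= M ->
  (forall k, `|w k| <= Lind_bound R L ^+ k * M) ->
  cvgn (series (fun k => t ^+ k / (k`!)%:R * w k)).
Proof.
move=> t0 M0 hw; apply: normed_cvg.
have coef0 k : 0 <= t ^+ k / (k`!)%:R by rewrite divr_ge0 // exprn_ge0.
apply: (@series_le_cvg _ _ (fun k => M * exp_coeff (t * Lind_bound R L) k)) => [k|k|k|].
- exact: normr_ge0.
- by rewrite mulr_ge0 // exp_coeff_ge0 // mulr_ge0 // Lind_bound_ge0.
- rewrite /= normrM (ger0_norm (coef0 k)); apply: le_trans (ler_wpM2l (coef0 k) (hw k)) _.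
  by rewrite /exp_coeff /= exprMn le_eqVlt; apply/orP; left; apply/eqP; ring.
- by have := @is_cvg_seriesZ _ _ M (is_cvg_series_exp_coeff (t * Lind_bound R L)).
Qed.

Lemma exp_partial_cvg (t : R) (rho : op) c a : 0 <= t ->
  cvgn (fun n => Re (exp_partial t n rho c a)) /\ cvgn (fun n => Im (exp_partial t n rho c a)).
Proof.
move=> t0; have bound k := le_trans (cnorm1_entry _ c a) (onorm1_iter_Lind k rho).
split.
- have -> : (fun n => Re (exp_partial t n rho c a)) =
     series (fun k => t ^+ k / (k`!)%:R * Re (iter k (@Lind R L) rho c a)).
    apply: funext => n; rewrite /series /= big_mkord /exp_partial Re_sum.
    by apply: eq_bigr => k _; rewrite Re_realM.
  apply: (cvg_series_exp_dominated t0 (onorm1_ge0 rho)) => k.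
  by apply: le_trans (bound k); rewrite /cnorm1 lerDl.
- have -> : (fun n => Im (exp_partial t n rho c a)) =
     series (fun k => t ^+ k / (k`!)%:R * Im (iter k (@Lind R L) rho c a)).
    apply: funext => n; rewrite /series /= big_mkord /exp_partial Im_sum.
    by apply: eq_bigr => k _; rewrite Im_realM.
  apply: (cvg_series_exp_dominated t0 (onorm1_ge0 rho)) => k.
  by apply: le_trans (bound k); rewrite /cnorm1 lerDr.
Qed.

Lemma tro_mulo_expL (O rho : op) (t : R) (z : C) : 0 <= t ->
  (forall n, (0 < n)%N -> tro (mulo O (exp_partial t n rho)) = z) ->
  tro (mulo O (expL t rho)) = z.
Proof.
move=> t0 hz; have hc c a := exp_partial_cvg rho c a t0.
have hcst (f : C -> R) : f (tro (mulo O (exp_partial t n rho))) @[n --> \oo] --> f z.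
  by apply: cvg_near_cst; exists 1%N => // n /= n0; rewrite hz.
have lim_Re : Re (tro (mulo O (exp_partial t n rho))) @[n --> \oo] -->
              Re (tro (mulo O (expL t rho))).
  have -> : (fun n => Re (tro (mulo O (exp_partial t n rho)))) =
     (fun n => \sum_a \sum_c (Re (O a c) * Re (exp_partial t n rho c a)
                 - Im (O a c) * Im (exp_partial t n rho c a))).
    by apply: funext => n; rewrite Re_tro_mulo.
  rewrite Re_tro_mulo; apply: (cvg_big add_continuous) => // a _.
  apply: (cvg_big add_continuous) => // c _.
  by apply: cvgB; apply: cvgMl_tmp; [exact: (hc c a).1 | exact: (hc c a).2].
have lim_Im : Im (tro (mulo O (exp_partial t n rho))) @[n --> \oo] -->
              Im (tro (mulo O (expL t rho))).
  have -> : (fun n => Im (tro (mulo O (exp_partial t n rho)))) =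
     (fun n => \sum_a \sum_c (Re (O a c) * Im (exp_partial t n rho c a)
                 + Im (O a c) * Re (exp_partial t n rho c a))).
    by apply: funext => n; rewrite Im_tro_mulo.
  rewrite Im_tro_mulo; apply: (cvg_big add_continuous) => // a _.
  apply: (cvg_big add_continuous) => // c _.
  by apply: cvgD; apply: cvgMl_tmp; [exact: (hc c a).2 | exact: (hc c a).1].
have eq_Re : Re (tro (mulo O (expL t rho))) = Re z.
  exact: (cvg_unique _ lim_Re (hcst (@complex.Re R))).
have eq_Im : Im (tro (mulo O (expL t rho))) = Im z.
  exact: (cvg_unique _ lim_Im (hcst (@complex.Im R))).
by move: eq_Re eq_Im; case: (tro _) => ? ?; case: z {hz hcst lim_Re lim_Im} => ? ? /= -> ->.
Qed.

End SeriesLimit.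

Theorem lemma1 (R : realType) (L : nat) (hL : (1 < L)%N)
  (Psi : bool -> bool -> R[i]) (rhoD : Dconfig L -> Dconfig L -> R[i])
  (hrhoD : is_stateD rhoD) (p1 p2 : pauli) (t : R) (ht : 0 <= t) :
  Defs.tro (Defs.mulo (@Pbar R L p1 p2) (Defs.expL t (Defs.rho0 Psi rhoD))) = expect Psi p1 p2.
Proof.
apply: tro_mulo_expL => // n n0.
by rewrite tro_exp_partial ?tro_Pbar_rho0 //; apply: commutes_code_Pbar.
Qed.
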